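(* Let $d\ge2$ and $n\ge2$, and consider the vector program $$\max\ \frac12\left(\frac{d-1}{d}\right)-\frac14\sum_{a=1}^{d^2-1}\frac{1}{\binom n2}\sum_{1\le u<v\le n}\langle x^a_u,x^a_v\rangle$$ over real vectors $x^a_u\in\mathbb R^{m}$ ($m$ arbitrary, $a\in[d^2-1]$, $u\in[n]$) subject to $\langle x^a_u,x^b_u\rangle=\frac2d\delta_{ab}$ for all $u$ and all $a,b$. Its optimal value equals $\frac{(d-1)(d+n)}{2d(n-1)}$.
   Context: This vector program is the level-two noncommutative sum-of-squares relaxation of Quantum Max-$d$-Cut on the unweighted complete graph $K_n$, written in terms of the Gram vectors $x^a_u$ of the generalized Gell-Mann observables $\Lambda^a_u$. *)

From HB Require Import structures.
From mathcomp Require Import all_boot all_order all_algebra.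
From mathcomp Require Import reals.
Set Implicit Arguments. Unset Strict Implicit. Unset Printing Implicit Defensive.
Import Order.TTheory GRing.Theory Num.Theory.
Local Open Scope ring_scope.

Definition dotv (R : realType) (m : nat) (u v : 'rV[R]_m) : R :=
  \sum_(i < m) u 0 i * v 0 i.

(* Number of generalized Gell-Mann observables per site: d^2 - 1. *)
Definition ngm (d : nat) : nat := (d ^ 2 - 1)%N.

Definition qmdc_feasible (R : realType) (d n m : nat)
    (x : 'I_(ngm d) -> 'I_n -> 'rV[R]_m) : Prop :=
  forall (u : 'I_n) (a b : 'I_(ngm d)),
    dotv (x a u) (x b u) = (if a == b then 2 / d%:R else 0).

Definition qmdc_obj (R : realType) (d n m : nat)
    (x : 'I_(ngm d) -> 'I_n -> 'rV[R]_m) : R :=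
  2^-1 * ((d%:R - 1) / d%:R)
  - 4^-1 * \sum_(a < ngm d)
      ('C(n, 2)%:R)^-1 * \sum_(u < n) \sum_(v < n | (u < v)%N) dotv (x a u) (x a v).

From HB Require Import structures.
From mathcomp Require Import all_boot all_order all_algebra.
From mathcomp Require Import reals ring lra.
Import Order.TTheory GRing.Theory Num.Theory.
Set Implicit Arguments. Unset Strict Implicit. Unset Printing Implicit Defensive.
Local Open Scope ring_scope.

(* For each a, 2 \sum_{u<v} <x^a_u, x^a_v> = |\sum_u x^a_u|^2 - \sum_u |x^a_u|^2 >= -2n/d,
   which bounds the objective.  Equality holds iff every \sum_u x^a_u vanishes; this is
   achieved by x^a_u = s (e_a (x) (e_u - 1/n)), whose blocks for distinct a are orthogonal
   and where the scale s makes every squared norm 2/d. *)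

Lemma sumr_sym_ltn (V : nmodType) n (f : 'I_n -> 'I_n -> V) :
    (forall u v, f u v = f v u) ->
  \sum_(u < n) \sum_(v < n) f u v
  = \sum_(u < n) f u u + (\sum_(u < n) \sum_(v < n | (u < v)%N) f u v) *+ 2.
Proof.
move=> fC.
have split_row u : \sum_(v < n) f u v
    = f u u + \sum_(v < n | (v < u)%N) f u v + \sum_(v < n | (u < v)%N) f u v.
  rewrite (bigID (fun v : 'I_n => (u < v)%N)) /= addrC; congr (_ + _).
  rewrite (bigD1 u) /= ?ltnn //; congr (_ + _); apply: eq_bigl => v.
  by rewrite -leqNgt ltn_neqAle andbC.
have lower_upper : \sum_(u < n) \sum_(v < n | (v < u)%N) f u v
                   = \sum_(u < n) \sum_(v < n | (u < v)%N) f u v.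
  rewrite (eq_bigr _ (fun u _ => big_mkcond _ _)) exchange_big /=.
  by apply: eq_bigr => u _; rewrite [RHS]big_mkcond; apply: eq_bigr => v _; rewrite fC.
rewrite (eq_bigr _ (fun u _ => split_row u)) !big_split /= lower_upper.
by rewrite mulr2n addrA.
Qed.

Section DotProduct.
Variables (R : realType) (m : nat).
Implicit Types (u v w : 'rV[R]_m).

Lemma dotvC u v : dotv u v = dotv v u.
Proof. by apply: eq_bigr => i _; rewrite mulrC. Qed.

Lemma dotv_ge0 u : 0 <= dotv u u.
Proof. by apply: sumr_ge0 => i _; rewrite -expr2 sqr_ge0. Qed.

Lemma dotvZl a u v : dotv (a *: u) v = a * dotv u v.
Proof. by rewrite mulr_sumr; apply: eq_bigr => i _; rewrite mxE mulrA. Qed.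

Lemma dotvZr a u v : dotv u (a *: v) = a * dotv u v.
Proof. by rewrite dotvC dotvZl dotvC. Qed.

Lemma dotv_suml (I : Type) (r : seq I) (P : pred I) (F : I -> 'rV[R]_m) v :
  dotv (\sum_(i <- r | P i) F i) v = \sum_(i <- r | P i) dotv (F i) v.
Proof.
rewrite /dotv exchange_big /=; apply: eq_bigr => j _.
by rewrite summxE mulr_suml.
Qed.

Lemma dotv_sumr (I : Type) (r : seq I) (P : pred I) (F : I -> 'rV[R]_m) u :
  dotv u (\sum_(i <- r | P i) F i) = \sum_(i <- r | P i) dotv u (F i).
Proof. by rewrite dotvC dotv_suml; apply: eq_bigr => i _; rewrite dotvC. Qed.

Lemma dotv_sum_sqr n (z : 'I_n -> 'rV[R]_m) :
  dotv (\sum_(u < n) z u) (\sum_(u < n) z u)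
  = \sum_(u < n) dotv (z u) (z u)
    + (\sum_(u < n) \sum_(v < n | (u < v)%N) dotv (z u) (z v)) *+ 2.
Proof.
rewrite dotv_suml -sumr_sym_ltn => [|u v]; last exact: dotvC.
by apply: eq_bigr => u _; rewrite dotv_sumr.
Qed.

Lemma sum_dotv_ltn_ge n (z : 'I_n -> 'rV[R]_m) :
  - \sum_(u < n) dotv (z u) (z u)
  <= (\sum_(u < n) \sum_(v < n | (u < v)%N) dotv (z u) (z v)) *+ 2.
Proof. by rewrite -subr_ge0 opprK addrC -dotv_sum_sqr dotv_ge0. Qed.

Lemma sum_dotv_ltn_eq n (z : 'I_n -> 'rV[R]_m) : \sum_(u < n) z u = 0 ->
  (\sum_(u < n) \sum_(v < n | (u < v)%N) dotv (z u) (z v)) *+ 2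
  = - \sum_(u < n) dotv (z u) (z u).
Proof.
move=> z0; apply/eqP; rewrite -subr_eq0 opprK addrC -dotv_sum_sqr z0.
by rewrite /dotv big1 // => i _; rewrite mxE mul0r.
Qed.

End DotProduct.

Lemma dotv_mxvec (R : realType) p q (A B : 'M[R]_(p, q)) :
  dotv (mxvec A) (mxvec B) = \sum_i \sum_j A i j * B i j.
Proof.
rewrite /dotv (reindex _ (curry_mxvec_bij _ _)) /= pair_bigA.
by apply: eq_bigr => -[i j] _ /=; rewrite !mxvecE.
Qed.

Section Kronecker.
Variables (R : realType) (k n : nat).

Definition kron_delta (a : 'I_k) (w : 'rV[R]_n) : 'rV[R]_(k * n) :=
  mxvec (delta_mx a ord0 *m w : 'M_(k, n)).

Lemma kron_deltaE a (w : 'rV[R]_n) i j :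
  (delta_mx a ord0 *m w : 'M_(k, n)) i j = (i == a)%:R * w 0 j.
Proof. by rewrite mxE big_ord1 mxE andbT. Qed.

Lemma dotv_kron_delta a b w w' :
  dotv (kron_delta a w) (kron_delta b w') = (a == b)%:R * dotv w w'.
Proof.
rewrite dotv_mxvec (bigD1 a) //= [X in _ + X]big1 ?addr0 => [|i ia]; last first.
  by apply: big1 => j _; rewrite kron_deltaE (negbTE ia) !mul0r.
rewrite mulr_sumr; apply: eq_bigr => j _.
by rewrite !kron_deltaE eqxx eq_sym mul1r mulrCA.
Qed.

Lemma kron_delta_sum a (I : Type) (r : seq I) (P : pred I) (F : I -> 'rV[R]_n) :
  kron_delta a (\sum_(i <- r | P i) F i) = \sum_(i <- r | P i) kron_delta a (F i).
Proof. by rewrite /kron_delta mulmx_sumr linear_sum. Qed.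

End Kronecker.

Section Centred.
Variables (R : realType) (n : nat).
Hypothesis n_gt0 : (0 < n)%N.

Definition centred (u : 'I_n) : 'rV[R]_n := delta_mx 0 u - n%:R^-1 *: const_mx 1.

Let n_neq0 : n%:R != 0 :> R. Proof. by rewrite pnatr_eq0 -lt0n. Qed.

Lemma centredE u j : centred u 0 j = (j == u)%:R - n%:R^-1.
Proof. by rewrite !mxE eqxx mulr1. Qed.

Lemma sum_centred_coord v : \sum_(j < n) centred v 0 j = 0.
Proof.
rewrite (eq_bigr _ (fun j _ => centredE v j)) sumrB (bigD1 v) //=.
rewrite big1 => [|j /negbTE -> //].
by rewrite eqxx addr0 sumr_const card_ord -[_ *+ n]mulr_natl mulfV // subrr.
Qed.

Lemma sum_centred : \sum_(u < n) centred u = 0.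
Proof.
apply/rowP => j; rewrite summxE mxE -[RHS](sum_centred_coord j).
by apply: eq_bigr => u _; rewrite !centredE eq_sym.
Qed.

Lemma dotv_centred u v : dotv (centred u) (centred v) = (u == v)%:R - n%:R^-1.
Proof.
rewrite /dotv; under eq_bigr do rewrite [centred u 0 _]centredE mulrBl.
rewrite sumrB -mulr_sumr sum_centred_coord mulr0 subr0 (bigD1 u) //=.
rewrite big1 => [|j /negbTE ->]; last exact: mul0r.
by rewrite eqxx mul1r addr0 centredE.
Qed.

End Centred.

Section Feasible.
Variables (R : realType) (d n m : nat) (x : 'I_(ngm d) -> 'I_n -> 'rV[R]_m).
Hypothesis x_feasible : qmdc_feasible x.

Lemma feasible_sum_dotvv a : \sum_(u < n) dotv (x a u) (x a u) = n%:R * (2 / d%:R).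
Proof.
rewrite (eq_bigr (fun _ => 2 / d%:R)) => [|u _]; last by rewrite x_feasible eqxx.
by rewrite sumr_const card_ord -[_ *+ n]mulr_natl.
Qed.

Lemma feasible_pair_sum_ge a :
  - (n%:R / d%:R) <= \sum_(u < n) \sum_(v < n | (u < v)%N) dotv (x a u) (x a v).
Proof.
have := sum_dotv_ltn_ge (x a); rewrite feasible_sum_dotvv mulrCA; lra.
Qed.

Lemma feasible_pair_sum_centred a : \sum_(u < n) x a u = 0 ->
  \sum_(u < n) \sum_(v < n | (u < v)%N) dotv (x a u) (x a v) = - (n%:R / d%:R).
Proof.
move/sum_dotv_ltn_eq; rewrite feasible_sum_dotvv mulrCA; lra.
Qed.

End Feasible.

Lemma natr_subn1_neq0 (R : numDomainType) n : (1 < n)%N -> n%:R - 1 != 0 :> R.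
Proof. by move=> n_gt1; rewrite subr_eq0 pnatr_eq1 neq_ltn n_gt1 orbT. Qed.

Lemma qmdc_value_closed_form (R : realType) (d n : nat) : (0 < d)%N -> (1 < n)%N ->
  2^-1 * ((d%:R - 1) / d%:R)
    - 4^-1 * \sum_(a < ngm d) ('C(n, 2)%:R)^-1 * - (n%:R / d%:R)
  = ((d%:R - 1) * (d%:R + n%:R)) / (2 * d%:R * (n%:R - 1)) :> R.
Proof.
move=> d_gt0 n_gt1.
have d_neq0 : d%:R != 0 :> R by rewrite pnatr_eq0 -lt0n.
have n_neq0 : n%:R != 0 :> R by rewrite pnatr_eq0 -lt0n ltnW.
have ngmE : (ngm d)%:R = d%:R ^+ 2 - 1 :> R by rewrite natrB ?natrX // expn_gt0 d_gt0.
have bin2E : 'C(n, 2)%:R = n%:R * (n%:R - 1) / 2 :> R.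
  have /(congr1 (fun k => k%:R : R)) := mul_bin_diag n 1.
  rewrite bin1 !natrM -subn1 natrB ?(ltnW n_gt1) // => ->.
  by field.
rewrite sumr_const card_ord -[_ *+ ngm d]mulr_natl ngmE bin2E.
by field; rewrite d_neq0 n_neq0 natr_subn1_neq0.
Qed.

Section Witness.
Variables (R : realType) (d n : nat).
Hypotheses (d_gt0 : (0 < d)%N) (n_gt1 : (1 < n)%N).

(* Chosen so that [qmdc_scale ^+ 2 * (1 - n^-1) = 2 / d]. *)
Definition qmdc_scale : R := Num.sqrt (2 * n%:R / (d%:R * (n%:R - 1))).

Definition qmdc_witness (a : 'I_(ngm d)) (u : 'I_n) : 'rV[R]_(ngm d * n) :=
  kron_delta a (qmdc_scale *: centred R u).

Lemma qmdc_witness_feasible : qmdc_feasible qmdc_witness.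
Proof.
have n_gt0 : (0 < n)%N by apply: ltnW.
have d_neq0 : d%:R != 0 :> R by rewrite pnatr_eq0 -lt0n.
have n_neq0 : n%:R != 0 :> R by rewrite pnatr_eq0 -lt0n.
have scale2 : qmdc_scale ^+ 2 = 2 * n%:R / (d%:R * (n%:R - 1)).
  by rewrite sqr_sqrtr // divr_ge0 ?mulr_ge0 ?subr_ge0 ?ler0n // ler1n ltnW.
move=> u a b; rewrite dotv_kron_delta dotvZl dotvZr dotv_centred // eqxx.
rewrite (mulrA qmdc_scale) -expr2 scale2.
by case: (a == b); rewrite /= ?mul0r // mul1r; field; rewrite d_neq0 n_neq0 natr_subn1_neq0.
Qed.

Lemma sum_qmdc_witness a : \sum_(u < n) qmdc_witness a u = 0.
Proof.
rewrite -kron_delta_sum -scaler_sumr sum_centred ?scaler0; last exact: ltnW.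
by rewrite /kron_delta mulmx0 linear0.
Qed.

End Witness.

Theorem mainTheorem15 (R : realType) (d n : nat) :
  (2 <= d)%N -> (2 <= n)%N ->
  let val : R := ((d%:R - 1) * (d%:R + n%:R)) / (2 * d%:R * (n%:R - 1)) in
  (forall (m : nat) (x : 'I_(ngm d) -> 'I_n -> 'rV[R]_m),
      qmdc_feasible x -> qmdc_obj x <= val) /\
  (exists (m : nat) (x : 'I_(ngm d) -> 'I_n -> 'rV[R]_m),
      qmdc_feasible x /\ qmdc_obj x = val).
Proof.
move=> d_ge2 n_ge2 val.
have d_gt0 : (0 < d)%N by apply: ltnW.
rewrite /val -(qmdc_value_closed_form R d_gt0 n_ge2).
split=> [m x x_feasible | ].
  rewrite lerD2l lerN2 ler_wpM2l ?invr_ge0 //; apply: ler_sum => a _.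
  by rewrite ler_wpM2l ?invr_ge0 ?ler0n ?feasible_pair_sum_ge.
have witness_feasible := qmdc_witness_feasible R d_gt0 n_ge2.
exists _, (@qmdc_witness R d n); split=> //.
congr (_ - 4^-1 * _); apply: eq_bigr => a _; congr (_ * _).
by rewrite feasible_pair_sum_centred ?sum_qmdc_witness.
Qed.
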